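(* Let $\mathbb{S}\in\mathbb{Z}^{N_X\times N_e}$, let $\mathbb{V}\in\mathbb{R}^{N_e\times N_z}$ be a matrix whose columns form a basis of $\mathrm{Ker}\,\mathbb{S}$, let $\mathcal{X}=\mathbb{R}^{N_X}_{>0}$, and let $\{\Psi^*_x\}_{x\in\mathcal{X}}$ be a family of dissipation functions on $\mathbb{R}^{N_e}$ with conjugates $\Psi_x$. Fix $x\in\mathcal{X}$ and let the cycle spaces be $\mathcal{Z}_x:=\mathbb{R}^{N_z}$ and $\mathfrak{Z}_x:=\mathrm{Im}\,\mathbb{V}^T=\mathbb{R}^{N_z}$, with the standard pairing. For $\zeta\in\mathfrak{Z}_x$ let $f^\lozenge(x,\zeta)$ be the unique minimizer of $\Psi^*_x(f)$ over $\{f\in\mathbb{R}^{N_e}:\mathbb{V}^Tf=\zeta\}$, and define $$\hat{\Psi}_x(z):=\Psi_x(\mathbb{V}z)\ (z\in\mathcal{Z}_x),\qquad \hat{\Psi}^*_x(\zeta):=\Psi^*_x\big(f^\lozenge(x,\zeta)\big)\ (\zeta\in\mathfrak{Z}_x).$$ Then $\hat{\Psi}_x$ and $\hat{\Psi}^*_x$ are Legendre–Fenchel conjugates of each other, $\hat{\Psi}^*_x(\zeta)=\max_{z}[\langle z,\zeta\rangle-\hat{\Psi}_x(z)]$ and $\hat{\Psi}_x(z)=\max_{\zeta}[\langle z,\zeta\rangle-\hat{\Psi}^*_x(\zeta)]$; their gradients $\nabla\hat{\Psi}_x(z)=\mathbb{V}^T\nabla\Psi_x(\mathbb{V}z)$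 and $\nabla\hat{\Psi}^*_x$ are mutually inverse bijections between $\mathcal{Z}_x$ and $\mathfrak{Z}_x$ (with $\mathbb{V}\nabla\hat\Psi^*_x(\zeta)=\nabla\Psi^*_x(f^\lozenge(x,\zeta))$); and both $\hat{\Psi}_x$ and $\hat{\Psi}^*_x$ are dissipation functions (strictly convex, $1$-coercive, symmetric under sign change, vanishing at $0$). That is, the dissipation functions on the edge spaces induce a dually flat structure on the cycle spaces.
   Context: A dissipation function on $\mathbb{R}^{n}$ is a strictly convex, continuously differentiable, $1$-coercive ($\psi(f)/\|f\|\to\infty$ as $\|f\|\to\infty$), even function $\psi$ with $\psi(0)=0$. $\Psi_x(j):=\max_f[\langle j,f\rangle-\Psi^*_x(f)]$ is the Legendre–Fenchel conjugate of $\Psi^*_x$ (also a dissipation function), and $\nabla\Psi_x,\nabla\Psi^*_x$ are mutually inverse bijections of $\mathbb{R}^{N_e}$. Note $\mathrm{Ker}\,\mathbb{V}=\{0\}$, $\mathrm{Im}\,\mathbb{V}=\mathrm{Ker}\,\mathbb{S}$, $\mathrm{Ker}\,\mathbb{V}^T=\mathrm{Im}\,\mathbb{S}^T$. *)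

From HB Require Import structures.
From mathcomp Require Import all_boot all_order all_algebra.
From mathcomp Require Import all_classical all_reals all_analysis.
Set Implicit Arguments. Unset Strict Implicit. Unset Printing Implicit Defensive.
Import Order.TTheory GRing.Theory Num.Theory.
Import numFieldNormedType.Exports.
Local Open Scope classical_set_scope.
Local Open Scope ring_scope.

Section Defs.
Variable R : realType.

Definition dotv (n : nat) (u v : 'cV[R]_n) : R := (u^T *m v) 0 0.

Definition grad (n : nat) (f : 'cV[R]_n -> R) (x : 'cV[R]_n) : 'cV[R]_n :=
  \col_i ('d f x (delta_mx i 0 : 'cV[R]_n)).

Definition strictly_convex (n : nat) (f : 'cV[R]_n -> R) : Prop :=
  forall (x y : 'cV[R]_n) (t : R), x != y -> 0 < t -> t < 1 ->
    f (t *: x + (1 - t) *: y) < t * f x + (1 - t) * f y.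

Definition C1 (n : nat) (f : 'cV[R]_n -> R) : Prop :=
  (forall x, differentiable f x) /\ continuous (grad f).

Definition coercive1 (n : nat) (f : 'cV[R]_n -> R) : Prop :=
  forall M : R, exists r : R, forall x : 'cV[R]_n,
    r < `|x| -> M < f x / `|x|.

Definition even_fun (n : nat) (f : 'cV[R]_n -> R) : Prop :=
  forall x, f (- x) = f x.

Definition dissipation (n : nat) (f : 'cV[R]_n -> R) : Prop :=
  [/\ strictly_convex f, C1 f, coercive1 f, even_fun f & f 0 = 0].

Definition LF_conj (n : nat) (g h : 'cV[R]_n -> R) : Prop :=
  forall j : 'cV[R]_n,
    (exists f, h j = dotv j f - g f) /\ (forall f, dotv j f - g f <= h j).

Definition is_constr_min (m n : nat) (g : 'cV[R]_m -> R) (A : 'M[R]_(n, m))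
  (b : 'cV[R]_n) (f : 'cV[R]_m) : Prop :=
  A *m f = b /\ forall f', A *m f' = b -> g f <= g f'.

Definition fdiamond (Ne Nz : nat) (PsiSx : 'cV[R]_Ne -> R) (V : 'M[R]_(Ne, Nz))
  (zeta : 'cV[R]_Nz) : 'cV[R]_Ne :=
  xget 0 [set f | is_constr_min PsiSx V^T zeta f].

Definition hatPsi (Ne Nz : nat) (Psix : 'cV[R]_Ne -> R) (V : 'M[R]_(Ne, Nz))
  (z : 'cV[R]_Nz) : R := Psix (V *m z).

Definition hatPsiS (Ne Nz : nat) (PsiSx : 'cV[R]_Ne -> R) (V : 'M[R]_(Ne, Nz))
  (zeta : 'cV[R]_Nz) : R := PsiSx (fdiamond PsiSx V zeta).

End Defs.

From HB Require Import structures.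
From mathcomp Require Import all_boot all_order all_algebra.
From mathcomp Require Import all_classical all_reals all_analysis.
From mathcomp Require Import lra ring.
Import Order.TTheory GRing.Theory Num.Theory.
Import numFieldNormedType.Exports.
Local Open Scope classical_set_scope.
Local Open Scope ring_scope.
Set Implicit Arguments. Unset Strict Implicit. Unset Printing Implicit Defensive.

(* Write [hP z = Psi (V z)]. Since [V] is injective and [V^T] is onto, [hP]
   inherits from [Psi] differentiability, strict convexity and the gradient
   inequality, and Fenchel-Young gives it an affine minorant
   [<z, zeta> - Psi* (W zeta)] of every slope, [W] a right inverse of [V^T].
   For such a function the tilted function [hP - <., zeta>] attains its
   minimum at a unique point, so [grad hP] is a bijection; its inverse is
   continuous and is the gradient of the Legendre transform
   [zeta |-> <grad_inv zeta, zeta> - hP (grad_inv zeta)], which is again a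
   dissipation function. Finally, if [grad hP z = zeta] then
   [f = grad Psi (V z)] satisfies [V^T f = zeta] and [grad Psi* f = V z] is
   orthogonal to [Ker V^T], so [f] is the constrained minimiser
   [f^lozenge(zeta)], and Fenchel's equality at [f] turns [Psi* f] into the
   Legendre transform of [hP] at [zeta]. *)

Section EuclideanPairing.
Variable R : realType.

Lemma mx_entry_le_norm m n (M : 'M[R]_(m, n)) i j : `|M i j| <= `|M|.
Proof.
rewrite (_ : `|M| = mx_norm M) // mx_normrE.
by apply/bigmax_geP; right => /=; exists (i, j).
Qed.

Lemma mx_norm_le_entries m n (M : 'M[R]_(m, n)) c :
  0 <= c -> (forall i j, `|M i j| <= c) -> `|M| <= c.
Proof.
move=> c0 Mc; rewrite (_ : `|M| = mx_norm M) // mx_normrE.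
by apply/bigmax_leP; split => // -[i j] _; exact: Mc.
Qed.

Lemma mx_norm_attained m n (M : 'M[R]_(m, n)) :
  M != 0 -> exists i j, `|M| = `|M i j|.
Proof.
move=> M0; have : mx_norm M != 0 by rewrite -[mx_norm M]/(`|M|) normr_eq0.
by move=> /mx_norm_neq0 [[i j] h]; exists i, j.
Qed.

Lemma dotvE n (u v : 'cV[R]_n) : dotv u v = \sum_i u i 0 * v i 0.
Proof. by rewrite /dotv mxE; apply: eq_bigr => i _; rewrite mxE. Qed.

Lemma dotvC n (u v : 'cV[R]_n) : dotv u v = dotv v u.
Proof. by rewrite !dotvE; apply: eq_bigr => i _; rewrite mulrC. Qed.

Lemma dotv_mulmxl m n (A : 'M[R]_(m, n)) u v :
  dotv (A *m u) v = dotv u (A^T *m v).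
Proof. by rewrite /dotv trmx_mul mulmxA. Qed.

Lemma dotvDr n (u v w : 'cV[R]_n) : dotv u (v + w) = dotv u v + dotv u w.
Proof. by rewrite /dotv mulmxDr mxE. Qed.

Lemma dotvZr n (u v : 'cV[R]_n) a : dotv u (a *: v) = a * dotv u v.
Proof. by rewrite /dotv -scalemxAr mxE. Qed.

Lemma dotvNr n (u v : 'cV[R]_n) : dotv u (- v) = - dotv u v.
Proof. by rewrite /dotv mulmxN mxE. Qed.

Lemma dotvBr n (u v w : 'cV[R]_n) : dotv u (v - w) = dotv u v - dotv u w.
Proof. by rewrite dotvDr dotvNr. Qed.

Lemma dotv0r n (u : 'cV[R]_n) : dotv u 0 = 0.
Proof. by rewrite /dotv mulmx0 mxE. Qed.

Lemma dotvDl n (u v w : 'cV[R]_n) : dotv (v + w) u = dotv v u + dotv w u.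
Proof. by rewrite dotvC dotvDr !(dotvC u). Qed.

Lemma dotvZl n (u v : 'cV[R]_n) a : dotv (a *: v) u = a * dotv v u.
Proof. by rewrite dotvC dotvZr dotvC. Qed.

Lemma dotvNl n (u v : 'cV[R]_n) : dotv (- v) u = - dotv v u.
Proof. by rewrite dotvC dotvNr dotvC. Qed.

Lemma dotvBl n (u v w : 'cV[R]_n) : dotv (v - w) u = dotv v u - dotv w u.
Proof. by rewrite dotvDl dotvNl. Qed.

Lemma dotv0l n (u : 'cV[R]_n) : dotv 0 u = 0.
Proof. by rewrite dotvC dotv0r. Qed.

Lemma dotv_deltal n (v : 'cV[R]_n) i : dotv (delta_mx i 0) v = v i 0.
Proof.
rewrite dotvE (bigD1 i) //= big1 ?addr0; first by rewrite mxE !eqxx mul1r.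
by move=> j ji; rewrite mxE (negbTE ji) mul0r.
Qed.

Lemma normr_dotv_le n (u v : 'cV[R]_n) : `|dotv u v| <= n%:R * (`|u| * `|v|).
Proof.
rewrite dotvE (le_trans (ler_norm_sum _ _ _)) //.
have -> : n%:R * (`|u| * `|v|) = \sum_(i < n) (`|u| * `|v|).
  by rewrite sumr_const card_ord mulr_natl.
apply: ler_sum => i _.
by rewrite normrM ler_pM ?mx_entry_le_norm.
Qed.

Lemma normr_mulmx_le m n (A : 'M[R]_(m, n)) :
  exists2 K, 0 <= K & forall x : 'cV[R]_n, `|A *m x| <= K * `|x|.
Proof.
have K0 : 0 <= \sum_i \sum_k `|A i k| by do 2![apply: sumr_ge0 => ? _].
exists (\sum_i \sum_k `|A i k|) => // x.
apply: mx_norm_le_entries => [|i j]; first exact: mulr_ge0.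
rewrite mxE (le_trans (ler_norm_sum _ _ _)) // (bigD1 i) //= mulrDl ler_wpDr //.
  by apply: mulr_ge0 => //; do 2![apply: sumr_ge0 => ? _].
rewrite mulr_suml; apply: ler_sum => k _.
by rewrite normrM ler_wpM2l ?mx_entry_le_norm.
Qed.

Lemma linear_mx_continuous a b c d (f : {linear 'M[R]_(a, b) -> 'M[R]_(c, d)}) K :
  (forall x, `|f x| <= K * `|x|) -> continuous f.
Proof.
move=> fK; apply/bounded_linear_continuous/linear_boundedP.
exists K; split; first exact: num_real.
by move=> r /ltW Kr x; apply: le_trans (fK x) _; exact: ler_wpM2r.
Qed.

Lemma mulmx_continuous m n (A : 'M[R]_(m, n)) :
  continuous (fun x : 'cV[R]_n => A *m x).
Proof.
have [K _ AK] := normr_mulmx_le A.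
exact: (@linear_mx_continuous _ _ _ _ (mulmx A) K).
Qed.

Lemma normr_trmx_le m n (x : 'M[R]_(m, n)) : `|x^T| <= `|x|.
Proof. by apply: mx_norm_le_entries => // i j; rewrite mxE mx_entry_le_norm. Qed.

Lemma trmx_continuous m n : continuous (fun x : 'M[R]_(m, n) => x^T).
Proof.
apply: (@linear_mx_continuous _ _ _ _ (@trmx R m n) 1) => x.
by rewrite mul1r normr_trmx_le.
Qed.

Lemma dotv_continuous n (zeta : 'cV[R]_n) :
  continuous (fun y : 'cV[R]_n => dotv y zeta).
Proof.
have -> : (fun y => dotv y zeta) = (fun M : 'M[R]_1 => M 0 0) \o mulmx zeta^T.
  by apply/funext => y /=; rewrite dotvC.
by move=> y; apply: continuous_comp; [exact: mulmx_continuous | exact: coord_continuous].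
Qed.

End EuclideanPairing.

Section GradientCalculus.
Variables (R : realType) (n : nat).
Implicit Types (F : 'cV[R]_n -> R) (z y v zeta : 'cV[R]_n).

Lemma diff_grad F z v : 'd F z v = dotv (grad F z) v.
Proof.
rewrite dotvE {1}(matrix_sum_delta v) linear_sum /=.
apply: eq_bigr => i _; rewrite big_ord1 linearZ /= /grad mxE mulrC.
by congr (_ * _); congr ('d F z _); apply/matrixP => p q; rewrite !mxE; case: q => -[].
Qed.

Lemma diff_eq_of_min_along F z v a : (forall y, differentiable F y) ->
  (forall t : R, F z <= F (z + t *: v) - t * a) -> 'd F z v = a.
Proof.
move=> dF zmin; pose g (t : R) := t *: v + z.
have dg t : differentiable g t.
  by apply: differentiableD => //; exact: (@differentiableZl _ _ _ id v t).
pose phi (t : R) := F (g t) - t * a.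
have dphi t : derivable phi t 1.
  apply/derivable1_diffP; apply: differentiableB => //.
  exact: differentiable_comp (dg t) (dF _).
have m11 : -1 <= (1 : R) by rewrite (le_trans (lerN10 _)).
have phimin t : t \in `]-1, 1[ -> phi 0 <= phi t.
  by move=> _; rewrite /phi /g scale0r add0r mul0r subr0 (addrC (t *: v)); exact: zmin.
have := @derive1_at_min R phi (-1) 1 0 m11 (fun t _ => dphi t).
rewrite in_itv /= ltrN10 ltr01 => /(_ isT phimin) dphi0.
have := @derive_val _ _ _ _ _ _ _ dphi0.
have dFg : derivable (F \o g) 0 1.
  by apply/derivable1_diffP; exact: differentiable_comp (dg 0) (dF _).
have dl : derivable (a \o* id) (0 : R) 1.
  by apply/derivable1_diffP; exact: differentiableM.
have -> : phi = (F \o g) - (a \o* id) by apply/funext.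
rewrite (deriveB dFg dl) (deriveMr _ (@derivable_id _ _ _ _)) derive_id.
have -> : 'D_1 (F \o g) 0 = 'D_v F z.
  rewrite /derive; do 2 f_equal; apply/funext => h /=.
  by rewrite /g /= scale0r add0r addr0 [h%:A]mulr1.
by rewrite deriveE // mulr1 => /eqP; rewrite subr_eq0 => /eqP.
Qed.

Lemma grad_eq_of_argmax F z zeta : (forall y, differentiable F y) ->
  (forall y, dotv y zeta - F y <= dotv z zeta - F z) -> grad F z = zeta.
Proof.
move=> dF zmax; apply/matrixP => i j; rewrite (ord1 j) /grad mxE.
apply: diff_eq_of_min_along => // t; have := zmax (z + t *: delta_mx i 0).
by rewrite dotvDl dotvZl dotv_deltal; lra.
Qed.

Lemma mulmx_differentiable m (A : 'M[R]_(m, n)) z : differentiable (mulmx A) z.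
Proof. exact/linear_differentiable/mulmx_continuous. Qed.

Lemma tilted_continuous F zeta : (forall y, differentiable F y) ->
  continuous (fun y => F y - dotv y zeta).
Proof.
move=> dF y; apply: cvgB; [exact: nbhs_filter | | exact: dotv_continuous].
exact/differentiable_continuous/dF.
Qed.

Lemma closed_bounded_argmin (A : set 'cV[R]_n) (g : 'cV[R]_n -> R) r :
  A !=set0 -> closed A -> (forall y, A y -> `|y| <= r) -> continuous g ->
  exists2 y0, A y0 & forall y, A y -> g y0 <= g y.
Proof.
move=> [a Aa] cA bA cg.
pose B := [set u : 'rV[R]_n | A u^T].
have cB : closed B.
  by apply: (preimage_closed _ cA) => /= u _; exact: trmx_continuous.
have bB : bounded_set B.
  exists r; split; first exact: num_real.
  move=> M rM u Bu /=; rewrite -[u]trmxK.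
  by rewrite (le_trans (normr_trmx_le _)) // (le_trans (bA _ Bu)) // ltW.
have B0 : B !=set0 by exists a^T; rewrite /B /= trmxK.
have cgB : {within B, continuous (fun u : 'rV[R]_n => g u^T)}.
  apply: continuous_subspaceT => u.
  exact: continuous_comp (@trmx_continuous _ 1 n u) (cg _).
have [c /set_mem Bc cmin] := compact_EVT_min B0 (bounded_closed_compact bB cB) cgB.
exists c^T => // y Ay; have := cmin y^T; rewrite trmxK; apply.
by apply/mem_set; rewrite /B /= trmxK.
Qed.

End GradientCalculus.

Section Convexity.
Variables (R : realType) (n : nat) (F : 'cV[R]_n -> R).
Hypothesis F_sc : strictly_convex F.

Let half_add : 2^-1 + 2^-1 = 1 :> R.
Proof. by rewrite [RHS](splitr 1) mul1r. Qed.

Let one_sub_half : 1 - 2^-1 = 2^-1 :> R.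
Proof. by rewrite -[X in X - _]half_add addrK. Qed.

Lemma strictly_convex_le x y t : 0 <= t -> t <= 1 ->
  F (t *: x + (1 - t) *: y) <= t * F x + (1 - t) * F y.
Proof.
move=> t0 t1; have [->|xy] := eqVneq x y.
  by rewrite -scalerDl -mulrDl addrC subrK scale1r mul1r.
move: t0; rewrite le_eqVlt => /orP [/eqP <-|t0].
  by rewrite scale0r mul0r !add0r subr0 scale1r mul1r.
move: t1; rewrite le_eqVlt => /orP [/eqP ->|t1].
  by rewrite subrr scale0r mul0r !addr0 scale1r mul1r.
exact/ltW/F_sc.
Qed.

Lemma strictly_convex_midpoint x y : x != y ->
  F (2^-1 *: (x + y)) < 2^-1 * (F x + F y).
Proof.
move=> xy; have := F_sc xy (_ : 0 < 2^-1) (_ : 2^-1 < 1).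
by rewrite one_sub_half scalerDr mulrDr; apply; rewrite ?invr_gt0 ?invf_lt1 ?ltr1n.
Qed.

Lemma even_convex_ge0 y : even_fun F -> F 0 = 0 -> 0 <= F y.
Proof.
move=> Fe F0; have := @strictly_convex_le y (- y) 2^-1.
rewrite one_sub_half scalerN subrr F0 Fe -mulrDl half_add mul1r.
by apply; rewrite ?invr_ge0 ?invf_le1 ?ler1n.
Qed.

Lemma tilted_argmax_unique zeta z1 z2 :
  (forall y, dotv y zeta - F y <= dotv z1 zeta - F z1) ->
  (forall y, dotv y zeta - F y <= dotv z2 zeta - F z2) -> z1 = z2.
Proof.
move=> z1max z2max; apply/eqP/negPn/negP => z12.
have := strictly_convex_midpoint z12; rewrite ltNge => /negP; apply.
have := z1max (2^-1 *: (z1 + z2)); have := z2max z1.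
rewrite dotvZl dotvDl; lra.
Qed.

Lemma constr_min_unique k (A : 'M[R]_(k, n)) b f1 f2 :
  is_constr_min F A b f1 -> is_constr_min F A b f2 -> f1 = f2.
Proof.
move=> [Af1 f1min] [Af2 f2min]; apply/eqP/negPn/negP => f12.
have := strictly_convex_midpoint f12; rewrite ltNge => /negP; apply.
have e12 : F f1 <= F f2 := f1min _ Af2.
have : F f1 <= F (2^-1 *: (f1 + f2)).
  by apply: f1min; rewrite -scalemxAr mulmxDr Af1 Af2 scalerDr -scalerDl half_add scale1r.
have := f2min _ Af1; lra.
Qed.

End Convexity.

Section AffineMinorants.
Variables (R : realType) (n : nat) (F : 'cV[R]_n -> R).
Hypothesis F_minor : forall xi, exists B, forall y, dotv y xi - B <= F y.

Lemma affine_minorants_linear_growth M : 0 <= M ->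
  exists C, forall y, M * `|y| - C <= F y.
Proof.
move=> M0; have [B FB] := choice F_minor.
pose e (i : 'I_n) : 'cV[R]_n := M *: delta_mx i 0.
pose C := `|B 0| + \sum_i (`|B (e i)| + `|B (- e i)|).
have C_ge k : `|B (e k)| + `|B (- e k)| <= C.
  rewrite /C (bigD1 k) //=.
  have : 0 <= \sum_(i < n | i != k) (`|B (e i)| + `|B (- e i)|) by apply: sumr_ge0.
  have := normr_ge0 (B 0); lra.
have via xi y : dotv y xi = M * `|y| -> `|B xi| <= C -> M * `|y| - C <= F y.
  move=> <- BC; apply: le_trans (FB xi y); rewrite lerD2l lerN2.
  exact: le_trans (ler_norm _) BC.
exists C => y; have [->|y0] := eqVneq y 0.
  apply: (via 0); first by rewrite dotv0r normr0 mulr0.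
  have : 0 <= \sum_i (`|B (e i)| + `|B (- e i)|) by apply: sumr_ge0.
  rewrite /C; lra.
have [i [j]] := mx_norm_attained y0; rewrite (ord1 j) => ny.
have [yp|yn] := leP 0 (y i 0).
  apply: (via (e i)); last by apply: le_trans (C_ge i); rewrite lerDl.
  by rewrite /e dotvZr dotvC dotv_deltal ny ger0_norm.
apply: (via (- e i)); last by apply: le_trans (C_ge i); rewrite lerDr.
by rewrite /e dotvNr dotvZr dotvC dotv_deltal ny ltr0_norm // mulrN.
Qed.

Lemma coercive1_of_affine_minorants : coercive1 F.
Proof.
move=> M; have [C FC] := affine_minorants_linear_growth (addr_ge0 (normr_ge0 M) ler01).
exists `|C| => x Cx; have x0 : 0 < `|x| by apply: le_lt_trans Cx.
rewrite ltr_pdivlMr //; apply: lt_le_trans (FC x).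
have := ler_wpM2r (ltW x0) (ler_norm M); have := ler_norm C.
rewrite mulrDl mul1r; lra.
Qed.

End AffineMinorants.

Section FenchelConjugates.
Variables (R : realType) (n : nat) (P Q : 'cV[R]_n -> R).

Definition conjugate_pair := [/\ forall f, differentiable P f, LF_conj P Q,
  cancel (grad P) (grad Q) & cancel (grad Q) (grad P)].

Hypothesis PQ_pair : conjugate_pair.

Let P_diff f : differentiable P f. Proof. by case: PQ_pair. Qed.
Let PQ : LF_conj P Q. Proof. by case: PQ_pair. Qed.
Let grad_PK : cancel (grad P) (grad Q). Proof. by case: PQ_pair. Qed.
Let grad_QK : cancel (grad Q) (grad P). Proof. by case: PQ_pair. Qed.

Lemma fenchel_young j f : dotv j f - P f <= Q j.
Proof. exact: (PQ j).2. Qed.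

Lemma fenchel_eq f : Q (grad P f) = dotv (grad P f) f - P f.
Proof.
have [[f0 Qf0] f0max] := PQ (grad P f).
have gf0 : grad P f0 = grad P f.
  apply: grad_eq_of_argmax => // y.
  by rewrite dotvC (dotvC f0) -Qf0; exact: f0max.
by rewrite Qf0 -(grad_PK f0) gf0 grad_PK.
Qed.

Lemma subgrad_ineq f f' : P f + dotv (grad P f) (f' - f) <= P f'.
Proof. by have := fenchel_young (grad P f) f'; rewrite fenchel_eq dotvBr; lra. Qed.

Lemma subgrad_ineq_conj j j' : Q j + dotv (grad Q j) (j' - j) <= Q j'.
Proof.
have := fenchel_young j' (grad Q j); have := fenchel_eq (grad Q j).
by rewrite grad_QK dotvBr !(dotvC (grad Q j)); lra.
Qed.

Lemma constr_min_of_grad k (A : 'M[R]_(n, k)) f z :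
  grad P f = A *m z -> is_constr_min P A^T (A^T *m f) f.
Proof.
move=> gPf; split=> // f' Af'; have := subgrad_ineq f f'.
by rewrite gPf dotv_mulmxl mulmxBr Af' subrr dotv0r addr0.
Qed.

End FenchelConjugates.

Section LegendreTransform.
Variables (R : realType) (n : nat) (F : 'cV[R]_n -> R).

(* Affine minorants of every slope mean superlinear growth; this is what makes
   [grad F] onto. *)
Definition legendre_type := [/\ forall z, differentiable F z, strictly_convex F,
  forall z y, F z + dotv (grad F z) (y - z) <= F y &
  forall xi, exists B, forall y, dotv y xi - B <= F y].

Hypothesis F_legendre : legendre_type.

Let F_diff z : differentiable F z. Proof. by case: F_legendre. Qed.
Let F_sc : strictly_convex F. Proof. by case: F_legendre. Qed.
Let F_subgrad z y : F z + dotv (grad F z) (y - z) <= F y.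
Proof. by case: F_legendre => _ _ + _; apply. Qed.
Let F_minor xi : exists B, forall y, dotv y xi - B <= F y.
Proof. by case: F_legendre => _ _ _; apply. Qed.

Lemma tilted_argmax_exists zeta :
  exists z, forall y, dotv y zeta - F y <= dotv z zeta - F z.
Proof.
have M0 : 0 <= n%:R * `|zeta| + 1 by rewrite addr_ge0 ?mulr_ge0.
have [C FC] := affine_minorants_linear_growth F_minor M0.
pose g y := F y - dotv y zeta.
have g_ge y : `|y| - C <= g y.
  have := FC y; have := ler_norm (dotv y zeta); have := normr_dotv_le y zeta.
  rewrite /g mulrDl mul1r mulrA mulrAC; lra.
pose r := `|C| + `|F 0|; pose A := [set y : 'cV[R]_n | `|y| <= r].
have cA : closed A.
  have -> : A = (fun y => `|y|) @^-1` [set x | x <= r] by [].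
  by apply: preimage_closed; [move=> y _; exact: norm_continuous | exact: closed_le].
have cg : continuous g := tilted_continuous F_diff.
have A0 : A !=set0 by exists 0; rewrite /A /= normr0 addr_ge0.
have [z _ zmin] := closed_bounded_argmin A0 cA (fun _ Ay => Ay) cg.
exists z => y; suff : g z <= g y by rewrite /g; lra.
have [Ay|Ay] := pselect (A y); first exact: zmin.
apply: le_trans (zmin 0 _) _; first by rewrite /A /= normr0 addr_ge0.
have : r < `|y| by rewrite ltNge; apply/negP.
have := g_ge y; have := ler_norm C; have := ler_norm (F 0).
by rewrite /g /r dotv0l subr0; lra.
Qed.

Lemma grad_argmax z y : dotv y (grad F z) - F y <= dotv z (grad F z) - F z.
Proof. by have := F_subgrad z y; rewrite dotvBr !(dotvC (grad F z)); lra. Qed.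

Lemma grad_surjective zeta : exists z, grad F z = zeta.
Proof.
by have [z zmax] := tilted_argmax_exists zeta; exists z; exact: grad_eq_of_argmax.
Qed.

Lemma grad_injective : injective (grad F).
Proof.
move=> z1 z2 e12; apply: (tilted_argmax_unique F_sc (zeta := grad F z1)).
  exact: grad_argmax.
by rewrite e12; exact: grad_argmax.
Qed.

Definition grad_inv zeta := xget 0 [set z | grad F z = zeta].

Lemma grad_invK : cancel grad_inv (grad F).
Proof. by move=> zeta; exact: (xgetPex 0 (grad_surjective zeta)). Qed.

Lemma gradK : cancel (grad F) grad_inv.
Proof. by move=> z; apply: grad_injective; rewrite grad_invK. Qed.

Definition legendre zeta := dotv (grad_inv zeta) zeta - F (grad_inv zeta).

Lemma legendre_ge zeta z : dotv z zeta - F z <= legendre zeta.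
Proof. by rewrite /legendre -{1 3}(grad_invK zeta); exact: grad_argmax. Qed.

Lemma legendre_grad z : legendre (grad F z) = dotv z (grad F z) - F z.
Proof. by rewrite /legendre gradK. Qed.

Lemma LF_conj_legendre : LF_conj F legendre.
Proof.
move=> zeta; split; last by move=> z; rewrite dotvC; exact: legendre_ge.
by exists (grad_inv zeta); rewrite /legendre dotvC.
Qed.

Lemma LF_conj_legendre_sym : LF_conj legendre F.
Proof.
move=> z; split; last by move=> zeta; have := legendre_ge zeta z; lra.
by exists (grad F z); rewrite legendre_grad; lra.
Qed.

Lemma tilted_gap_on_sphere zeta0 e : 0 < e -> exists2 delta, 0 < delta &
  forall w, `|w - grad_inv zeta0| = e -> dotv w zeta0 - F w + delta <= legendre zeta0.
Proof.
move=> e0; set z0 := grad_inv zeta0.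
pose S := [set w : 'cV[R]_n | `|w - z0| = e].
have [S0|S0] := pselect (S !=set0); last first.
  by exists 1 => // w Sw; exfalso; apply: S0; exists w.
have cS : closed S.
  have -> : S = (fun w => `|w - z0|) @^-1` [set x | x = e] by [].
  apply: preimage_closed; last exact: closed_eq.
  move=> w _; apply: continuous_comp; last exact: norm_continuous.
  by apply: continuousB => //; exact: cst_continuous.
have bS w : S w -> `|w| <= e + `|z0|.
  by move=> <-; rewrite -{1}(subrK z0 w); exact: ler_normD.
have [wm Swm wmin] :=
  closed_bounded_argmin S0 cS bS (tilted_continuous (zeta := zeta0) F_diff).
exists (legendre zeta0 - (dotv wm zeta0 - F wm)); last first.
  by move=> w /wmin; rewrite /legendre -/z0; lra.
rewrite subr_gt0 lt_neqAle legendre_ge andbT; apply/eqP => wm_max.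
have wm_z0 : wm = z0.
  by apply: (tilted_argmax_unique F_sc (zeta := zeta0)) => y;
    rewrite ?wm_max; exact: legendre_ge.
by move: Swm; rewrite /S /= wm_z0 subrr normr0 => e_eq0; move: e0; rewrite -e_eq0 ltxx.
Qed.

Lemma tilted_gap_le zeta0 zeta e : 0 < e ->
  e <= `|grad_inv zeta - grad_inv zeta0| -> exists2 w, `|w - grad_inv zeta0| = e &
    legendre zeta0 - (dotv w zeta0 - F w) <= n%:R * (e * `|zeta - zeta0|).
Proof.
move=> e0 eD; set z0 := grad_inv zeta0; set z1 := grad_inv zeta.
set D := `|z1 - z0| in eD; have D0 : 0 < D := lt_le_trans e0 eD.
pose s := e / D; have s0 : 0 <= s by rewrite divr_ge0 ?ltW.
have s1 : s <= 1 by rewrite ler_pdivrMr // mul1r.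
pose w := z0 + s *: (z1 - z0).
have w_z0 : w - z0 = s *: (z1 - z0) by rewrite /w addrC addKr.
have w_cvx : w = s *: z1 + (1 - s) *: z0 by apply/matrixP => i j; rewrite !mxE; ring.
have Sw : `|w - z0| = e by rewrite w_z0 normrZ -/D ger0_norm ?divfK ?gt_eqF.
exists w => //.
have Fw : F w <= s * F z1 + (1 - s) * F z0.
  by rewrite w_cvx; exact: strictly_convex_le.
have z1_max : dotv z0 zeta - F z0 <= dotv z1 zeta - F z1 := legendre_ge zeta z0.
have bound : dotv (w - z0) (zeta - zeta0) <= n%:R * (e * `|zeta - zeta0|).
  by rewrite -Sw; apply: le_trans (ler_norm _) (normr_dotv_le _ _).
have lin : dotv (w - z0) (zeta - zeta0) =
    s * (dotv z1 zeta - dotv z0 zeta) - (dotv w zeta0 - dotv z0 zeta0).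
  by rewrite -!dotvBl w_z0 !dotvZl !dotvBl !dotvBr; ring.
have : s * (F z1 - F z0) <= s * (dotv z1 zeta - dotv z0 zeta).
  by rewrite ler_wpM2l //; lra.
rewrite /legendre -/z0; move: bound lin Fw; rewrite !mulrBr mulrBl mul1r; lra.
Qed.

(* If [grad_inv zeta] leaves the ball of radius [e] around [grad_inv zeta0],
   the gap [delta] of the tilted function on its sphere forces
   [delta <= n e |zeta - zeta0|]. *)
Lemma grad_inv_continuous : continuous grad_inv.
Proof.
move=> zeta0; apply/(@cvgrPdist_lt _ _ _ (nbhs zeta0)) => e e0.
have [delta delta0 gap] := tilted_gap_on_sphere zeta0 e0.
have K0 : 0 < n%:R * e + 1 by rewrite ltr_wpDl // mulr_ge0 // ltW.
apply/(nbhs_normP zeta0); exists (delta / (n%:R * e + 1)); first by rewrite /= divr_gt0.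
move=> zeta /=; rewrite distrC ltr_pdivlMr // => near.
rewrite distrC ltNge; apply/negP => /(tilted_gap_le e0) [w /gap w_gap w_le].
have : n%:R * (e * `|zeta - zeta0|) <= `|zeta - zeta0| * (n%:R * e + 1).
  by rewrite mulrA mulrC ler_wpM2l // lerDl.
lra.
Qed.

Lemma legendre_increment zeta0 h :
  0 <= legendre (h + zeta0) - (legendre zeta0 + dotv (grad_inv zeta0) h)
    <= dotv (grad_inv (h + zeta0) - grad_inv zeta0) h.
Proof.
have := legendre_ge (h + zeta0) (grad_inv zeta0).
have := legendre_ge zeta0 (grad_inv (h + zeta0)).
by rewrite /legendre dotvBl !dotvDr => ? ?; apply/andP; split; lra.
Qed.

Lemma legendre_diff zeta0 :
  differentiable legendre zeta0 /\ grad legendre zeta0 = grad_inv zeta0.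
Proof.
set z0 := grad_inv zeta0.
have lin : linear (fun h : 'cV[R]_n => dotv z0 h) by move=> a x y; rewrite dotvDr dotvZr.
pose L : {linear 'cV[R]_n -> R} := HB.pack (fun h => dotv z0 h) (GRing.isLinear.Build _ _ _ _ _ lin).
have cL : continuous L.
  have -> : (L : _ -> _) = (fun h => dotv h z0) by apply/funext => h /=; rewrite dotvC.
  exact: dotv_continuous.
have expand : legendre \o shift zeta0 = cst (legendre zeta0) + L +o_ 0 id.
  apply/eqaddoP => eps eps0; have K0 : 0 < n%:R + 1 :> R by rewrite ltr_wpDl.
  have : {for zeta0, continuous grad_inv} by exact: grad_inv_continuous.
  move=> /cvgrPdist_lt /(_ (eps / (n%:R + 1))).
  rewrite divr_gt0 // => /(_ isT) /nbhs_normP [d d0 near].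
  apply/(nbhs_normP (0 : 'cV[R]_n)); exists d => // h /= h_small.
  have /near /= : `|zeta0 - (h + zeta0)| < d by rewrite opprD addrCA subrr addr0 -sub0r.
  rewrite distrC -/z0 ltr_pdivlMr // mulrDr mulr1 => z_near.
  have /andP [inc_ge0 inc_le] := legendre_increment zeta0 h.
  rewrite ger0_norm //; apply: le_trans inc_le _.
  apply: le_trans (ler_norm _) _; apply: le_trans (normr_dotv_le _ _) _.
  rewrite mulrA ler_wpM2r //; have := normr_ge0 (grad_inv (h + zeta0) - z0); lra.
have dE : 'd legendre zeta0 = L :> (_ -> _) := diff_unique cL expand.
split; first by apply/diff_locallyP; rewrite dE.
by apply/matrixP => i j; rewrite (ord1 j) /grad mxE dE /= dotvC dotv_deltal.
Qed.

Lemma grad_legendre : grad legendre = grad_inv.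
Proof. by apply/funext => zeta; exact: (legendre_diff zeta).2. Qed.

Lemma legendre_attained zeta z : dotv z zeta - F z = legendre zeta -> grad F z = zeta.
Proof. by move=> zmax; apply: grad_eq_of_argmax => // y; rewrite zmax legendre_ge. Qed.

Lemma legendre_strictly_convex : strictly_convex legendre.
Proof.
move=> x y t xy t0 t1; set z := grad_inv (t *: x + (1 - t) *: y).
have lx := legendre_ge x z; have ly := legendre_ge y z.
have t1' : 0 < 1 - t by rewrite subr_gt0.
rewrite {1}/legendre -/z dotvDr !dotvZr.
rewrite lt_neqAle; apply/andP; split; last first.
  by have := ler_wpM2l (ltW t0) lx; have := ler_wpM2l (ltW t1') ly; lra.
apply: contra_neq xy => eq_cvx.
have [ex ey] : dotv z x - F z = legendre x /\ dotv z y - F z = legendre y.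
  by have := ler_wpM2l (ltW t0) lx; have := ler_wpM2l (ltW t1') ly; nra.
by rewrite -(legendre_attained ex) -(legendre_attained ey).
Qed.

Lemma legendre_even : even_fun F -> even_fun legendre.
Proof.
move=> F_even; have le zeta : legendre (- zeta) <= legendre zeta.
  have := legendre_ge zeta (- grad_inv (- zeta)).
  by rewrite F_even dotvNl /legendre dotvNr.
by move=> zeta; apply/eqP; rewrite eq_le le /= -{1}(opprK zeta) le.
Qed.

Lemma legendre0 : even_fun F -> F 0 = 0 -> legendre 0 = 0.
Proof.
move=> F_even F0; apply/eqP; rewrite eq_le; apply/andP; split.
  by rewrite /legendre dotv0r sub0r oppr_le0 even_convex_ge0.
by have := legendre_ge 0 0; rewrite dotv0l F0 subrr.
Qed.

Lemma legendre_dissipation : even_fun F -> F 0 = 0 -> dissipation legendre.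
Proof.
move=> F_even F0; split.
- exact: legendre_strictly_convex.
- split; first by move=> zeta; exact: (legendre_diff zeta).1.
  by rewrite grad_legendre; exact: grad_inv_continuous.
- apply: coercive1_of_affine_minorants => xi.
  by exists (F xi) => zeta; rewrite dotvC; exact: legendre_ge.
- exact: legendre_even.
- exact: legendre0.
Qed.

End LegendreTransform.

Section CycleSpace.
Variables (R : realType) (Ne Nz : nat) (V : 'M[R]_(Ne, Nz)) (P Q : 'cV[R]_Ne -> R).
Hypothesis V_inj : forall z : 'cV[R]_Nz, V *m z = 0 -> z = 0.
Hypotheses (P_diss : dissipation P) (Q_diss : dissipation Q) (PQ : LF_conj P Q).
Hypotheses (grad_PK : cancel (grad P) (grad Q)) (grad_QK : cancel (grad Q) (grad P)).

Local Notation hP := (hatPsi Q V).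
Local Notation hPS := (hatPsiS P V).

Let P_sc : strictly_convex P. Proof. by case: P_diss. Qed.
Let Q_diff j : differentiable Q j. Proof. by case: Q_diss => _ []. Qed.

Let PQ_pair : conjugate_pair P Q.
Proof. by split=> // f; case: P_diss => _ []. Qed.

Lemma mulmx_V_inj : injective (fun z : 'cV[R]_Nz => V *m z).
Proof. by move=> z1 z2 e; apply/subr0_eq/V_inj; rewrite mulmxBr e subrr. Qed.

Lemma trmxV_right_inverse : exists W : 'M[R]_(Ne, Nz), V^T *m W = 1%:M.
Proof.
suff /mulmxVp VTW : row_free V^T by exists (pinvmx V^T).
rewrite -kermx_eq0; apply/eqP/row_matrixP => i; rewrite row0.
have : row i (kermx V^T) *m V^T = 0 by rewrite -row_mul (sub_kermxP (submx_refl _)) row0.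
move=> /(congr1 trmx); rewrite trmx_mul trmxK trmx0 => /V_inj.
by move=> /(congr1 trmx); rewrite trmxK trmx0.
Qed.

Lemma hatPsi_differentiable z : differentiable hP z.
Proof. exact: differentiable_comp (mulmx_differentiable V z) (Q_diff _). Qed.

Lemma grad_hatPsi z : grad hP z = V^T *m grad Q (V *m z).
Proof.
apply/matrixP => i j; rewrite (ord1 j) -[RHS]dotv_deltal -dotv_mulmxl dotvC -diff_grad.
rewrite /grad mxE (_ : hP = Q \o mulmx V) // diff_comp //; last exact: mulmx_differentiable.
by rewrite /= diff_lin //; exact: mulmx_continuous.
Qed.

Lemma hatPsi_subgrad z y : hP z + dotv (grad hP z) (y - z) <= hP y.
Proof.
rewrite grad_hatPsi dotvC -dotv_mulmxl dotvC mulmxBr.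
exact: subgrad_ineq_conj PQ_pair (V *m z) (V *m y).
Qed.

Lemma hatPsi_strictly_convex : strictly_convex hP.
Proof.
move=> x y t xy t0 t1; rewrite /hatPsi mulmxDr -!scalemxAr.
by case: Q_diss => Q_sc _ _ _ _; apply: Q_sc => //; apply: contra_neq xy => /mulmx_V_inj.
Qed.

Lemma hatPsi_affine_minorant xi : exists B, forall y, dotv y xi - B <= hP y.
Proof.
have [W VTW] := trmxV_right_inverse; exists (P (W *m xi)) => y.
rewrite -[xi in dotv y xi]mul1mx -VTW -mulmxA -dotv_mulmxl.
exact: fenchel_young PQ_pair _ _.
Qed.

Lemma hatPsi_dissipation : dissipation hP.
Proof.
case: Q_diss => _ [_ gradQ_cont] _ Q_even Q0; split.
- exact: hatPsi_strictly_convex.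
- split; first exact: hatPsi_differentiable.
  rewrite (_ : grad hP = fun z => V^T *m grad Q (V *m z)); last first.
    by apply/funext => z; exact: grad_hatPsi.
  move=> z; apply: continuous_comp; last exact: mulmx_continuous.
  by apply: continuous_comp; [exact: mulmx_continuous | exact: gradQ_cont].
- exact: coercive1_of_affine_minorants hatPsi_affine_minorant.
- by move=> z; rewrite /hatPsi mulmxN Q_even.
- by rewrite /hatPsi mulmx0 Q0.
Qed.

Lemma hatPsi_legendre_type : legendre_type hP.
Proof.
split; [exact: hatPsi_differentiable | exact: hatPsi_strictly_convex |
        exact: hatPsi_subgrad | exact: hatPsi_affine_minorant].
Qed.

Lemma fdiamond_constr_min zeta :
  is_constr_min P V^T zeta (grad Q (V *m grad_inv hP zeta)).
Proof.
rewrite -{1}(grad_invK hatPsi_legendre_type zeta) grad_hatPsi.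
exact: (constr_min_of_grad PQ_pair) (grad_QK _).
Qed.

Lemma fdiamond_unique zeta : exists! f, is_constr_min P V^T zeta f.
Proof.
exists (grad Q (V *m grad_inv hP zeta)); split; first exact: fdiamond_constr_min.
by move=> f; exact: (constr_min_unique P_sc (fdiamond_constr_min zeta)).
Qed.

Lemma fdiamondE zeta : fdiamond P V zeta = grad Q (V *m grad_inv hP zeta).
Proof.
apply: xget_unique; first exact: fdiamond_constr_min.
by move=> f fmin; exact: (constr_min_unique P_sc fmin (fdiamond_constr_min zeta)).
Qed.

Lemma hatPsiSE : hPS = legendre hP.
Proof.
apply/funext => zeta; rewrite /hatPsiS fdiamondE /legendre.
set z := grad_inv hP zeta; have := fenchel_eq PQ_pair (grad Q (V *m z)).
have -> : dotv (grad P (grad Q (V *m z))) (grad Q (V *m z)) = dotv z zeta.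
  by rewrite grad_QK dotv_mulmxl -grad_hatPsi grad_invK //; exact: hatPsi_legendre_type.
by rewrite grad_QK /hatPsi; lra.
Qed.

End CycleSpace.

Theorem mainTheorem12 (R : realType) (NX Ne Nz : nat)
  (S : 'M[int]_(NX, Ne)) (V : 'M[R]_(Ne, Nz))
  (PsiS Psi : 'cV[R]_NX -> 'cV[R]_Ne -> R) :
  (* columns of V form a basis of Ker S *)
  (forall z : 'cV[R]_Nz, V *m z = 0 -> z = 0) ->
  (forall f : 'cV[R]_Ne, map_mx intr S *m f = 0 <-> exists z, f = V *m z) ->
  (* {Psi*_x} is a family of dissipation functions on R^Ne, x in R^NX_{>0},
     with Legendre-Fenchel conjugates Psi_x (standing facts of the setting:
     Psi_x is a dissipation function and the gradients are mutually inverse) *)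
  (forall x : 'cV[R]_NX, (forall i, 0 < x i 0) -> dissipation (PsiS x)) ->
  (forall x : 'cV[R]_NX, (forall i, 0 < x i 0) -> LF_conj (PsiS x) (Psi x)) ->
  (forall x : 'cV[R]_NX, (forall i, 0 < x i 0) -> dissipation (Psi x)) ->
  (forall x : 'cV[R]_NX, (forall i, 0 < x i 0) ->
     (forall f, grad (Psi x) (grad (PsiS x) f) = f) /\
     (forall j, grad (PsiS x) (grad (Psi x) j) = j)) ->
  forall x : 'cV[R]_NX, (forall i, 0 < x i 0) ->
  let hP := hatPsi (Psi x) V in
  let hPS := hatPsiS (PsiS x) V in
  (* f^lozenge(x, zeta) is well defined: a unique minimizer exists *)
      (forall zeta : 'cV[R]_Nz, exists! f, is_constr_min (PsiS x) V^T zeta f) /\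
      (* Legendre-Fenchel duality (with max) *)
      (LF_conj hP hPS /\ LF_conj hPS hP) /\
      (* gradients *)
      (forall z, differentiable hP z /\ grad hP z = V^T *m grad (Psi x) (V *m z)) /\
      (* mutually inverse bijections between the cycle spaces *)
      (forall z, grad hPS (grad hP z) = z) /\ (forall zeta, grad hP (grad hPS zeta) = zeta) /\
      (forall zeta, V *m grad hPS zeta = grad (PsiS x) (fdiamond (PsiS x) V zeta)) /\
      (dissipation hP /\ dissipation hPS).
Proof.
move=> V_inj _ PsiS_diss PsiS_conj Psi_diss grad_inverse x x_pos hP hPS.
have [grad_PK grad_QK] := grad_inverse x x_pos.
have P_diss := PsiS_diss x x_pos; have Q_diss := Psi_diss x x_pos.
have PQ := PsiS_conj x x_pos.
have hP_legendre := hatPsi_legendre_type V_inj P_diss Q_diss PQ grad_PK grad_QK.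
have hPSE : hPS = legendre hP := hatPsiSE V_inj P_diss Q_diss PQ grad_PK grad_QK.
have hP_diss := hatPsi_dissipation V_inj P_diss Q_diss PQ grad_PK grad_QK.
split; first exact: fdiamond_unique V_inj P_diss Q_diss PQ grad_PK grad_QK.
split; first by rewrite hPSE; split; [exact: LF_conj_legendre | exact: LF_conj_legendre_sym].
split; first by move=> z; split; [exact: hatPsi_differentiable | exact: grad_hatPsi].
rewrite hPSE (grad_legendre hP_legendre); split; first exact: gradK.
split; first exact: grad_invK.
split; first by move=> zeta; rewrite (fdiamondE V_inj P_diss Q_diss PQ grad_PK grad_QK) grad_QK.
split; first exact: hP_diss.
by case: hP_diss => _ _ _ hP_even hP0; exact: legendre_dissipation.
Qed.
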